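(* Let $n\ge1$ and let $f:I^n\to\mathbb{R}$ be a bounded function. Let $x=(x_1,\ldots,x_n)\in(0,1)^n$ be a point at which $f$ is (Fréchet) differentiable. Then for each $k=1,\ldots,n$, $$\lim_{m\to\infty}\frac{\partial\,\mathscr{B}^n_m(f)}{\partial x_k}(x)=\frac{\partial f}{\partial x_k}(x).$$
   Context: $I=[0,1]$. $b_{i,m}(t)=\binom{m}{i}t^i(1-t)^{m-i}$, $B^n_{i,m}(x)=\prod_k b_{i_k,m}(x_k)$ for $i\in\{0,\ldots,m\}^n$, and $\mathscr{B}^n_m(f)=\sum_i f(\tfrac{i}{m})B^n_{i,m}$ with $\tfrac im=(\tfrac{i_1}{m},\ldots,\tfrac{i_n}{m})$. *)

From Stdlib Require Import Reals.
Open Scope R_scope.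

(* Points of R^n are encoded as functions nat -> R; only coordinates
   0..n-1 are meaningful. *)

Definition in_cube (n : nat) (y : nat -> R) : Prop :=
  forall k, (k < n)%nat -> 0 <= y k <= 1.
Definition in_open_cube (n : nat) (y : nat -> R) : Prop :=
  forall k, (k < n)%nat -> 0 < y k < 1.

(* f only depends on the first n coordinates (it is a function on R^n). *)
Definition depends_on_first (n : nat) (f : (nat -> R) -> R) : Prop :=
  forall y z, (forall k, (k < n)%nat -> y k = z k) -> f y = f z.

Definition bounded_on_cube (n : nat) (f : (nat -> R) -> R) : Prop :=
  exists M, forall y, in_cube n y -> Rabs (f y) <= M.

Fixpoint sum_lt (n : nat) (g : nat -> R) : R :=
  match n with
  | O => 0
  | S n' => sum_lt n' g + g n'
  end.

Definition norm_n (n : nat) (v : nat -> R) : R := sqrt (sum_lt n (fun k => (v k)^2)).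

Definition frechet_differentiable_at (n : nat) (f : (nat -> R) -> R) (x : nat -> R) : Prop :=
  exists g : nat -> R,
    forall eps, 0 < eps -> exists delta, 0 < delta /\
      forall y, in_cube n y ->
        norm_n n (fun k => y k - x k) < delta ->
        Rabs (f y - f x - sum_lt n (fun k => g k * (y k - x k)))
          <= eps * norm_n n (fun k => y k - x k).

Definition upd (x : nat -> R) (k : nat) (t : R) : nat -> R :=
  fun j => if Nat.eqb j k then t else x j.

Definition bern_b (i m : nat) (t : R) : R := C m i * t ^ i * (1 - t) ^ (m - i).

(* Sum of F i over all multi-indices i : {0..n-1} -> {0..m}
   (coordinates k >= n of the multi-index are set to 0). *)
Fixpoint msum (n m : nat) (F : (nat -> nat) -> R) : R :=
  match n with
  | O => F (fun _ => O)
  | S n' => sum_f_R0 (fun j => msum n' m (fun i => F (fun k => if Nat.eqb k n' then j else i k))) m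
  end.

Fixpoint prod_lt (n : nat) (g : nat -> R) : R :=
  match n with
  | O => 1
  | S n' => prod_lt n' g * g n'
  end.
Definition bern_B (n m : nat) (i : nat -> nat) (x : nat -> R) : R :=
  prod_lt n (fun k => bern_b (i k) m (x k)).

Definition bernstein (n m : nat) (f : (nat -> R) -> R) (x : nat -> R) : R :=
  msum n m (fun i => f (fun k => INR (i k) / INR m) * bern_B n m i x).

(* Write c = x_k (1 - x_k).  Since b'_{i,m}(t) = b_{i,m}(t) (i - m t) / (t (1 - t)), the
   partial derivative of B^n_m(f) in the direction k at an interior point x is
       D_m = (m / c) * E[f(Y) (Y_k - x_k)],
   where E is the mean over grid points Y = i/m weighted by B^n_{i,m}(x), under which the
   coordinates Y_l are independent scaled binomial variables.  Expanding
   f(Y) = f(x) + g.(Y - x) + R(Y) with g the Frechet derivative, the constant term has zero mean,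
   the linear term gives exactly g_k c / m, and the remainder satisfies
       |R(y)| |y_k - x_k| <= eps |y - x|^2 + K sum_l (y_l - x_l)^4,
   whose mean is O(eps / m + K / m^2) by the binomial moment formulas.  So |D_m - g_k| <= e + K'/m
   for every e > 0, and g_k is the partial derivative of f. *)

From Stdlib Require Import Reals Lra Lia Psatz.
Open Scope R_scope.

Lemma sum_lt_ext p f g : (forall l, (l < p)%nat -> f l = g l) -> sum_lt p f = sum_lt p g.
Proof.
  induction p as [|p IH]; intros H; simpl; [reflexivity|].
  rewrite IH, H by (lia || (intros; apply H; lia)). reflexivity.
Qed.

Lemma sum_lt_mulr p f c : sum_lt p f * c = sum_lt p (fun l => f l * c).
Proof. induction p as [|p IH]; simpl; [ring|rewrite <- IH; ring]. Qed.

Lemma sum_lt_const p c : sum_lt p (fun _ => c) = INR p * c.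
Proof. induction p as [|p IH]; simpl sum_lt; [simpl; ring|rewrite IH, S_INR; ring]. Qed.

Lemma sum_lt_le p f g : (forall l, (l < p)%nat -> f l <= g l) -> sum_lt p f <= sum_lt p g.
Proof.
  induction p as [|p IH]; intros H; simpl; [lra|].
  apply Rplus_le_compat; [apply IH; intros; apply H|apply H]; lia.
Qed.

Lemma sum_lt_nonneg p f : (forall l, (l < p)%nat -> 0 <= f l) -> 0 <= sum_lt p f.
Proof.
  intros H. replace 0 with (sum_lt p (fun _ => 0)) by (rewrite sum_lt_const; ring).
  apply sum_lt_le; auto.
Qed.

Lemma sum_lt_single p k f : (k < p)%nat ->
  (forall l, (l < p)%nat -> l <> k -> f l = 0) -> sum_lt p f = f k.
Proof.
  induction p as [|p IH]; intros Hk H; [lia|]. simpl.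
  destruct (Nat.eq_dec k p) as [->|Hne].
  - rewrite (sum_lt_ext p f (fun _ => 0)), sum_lt_const by (intros; apply H; lia). ring.
  - rewrite IH, (H p) by (auto; lia). ring.
Qed.

Lemma sum_lt_term_le p f k : (k < p)%nat -> (forall l, (l < p)%nat -> 0 <= f l) ->
  f k <= sum_lt p f.
Proof.
  induction p as [|p IH]; intros Hk H; [lia|]. simpl.
  assert (0 <= sum_lt p f) by (apply sum_lt_nonneg; intros; apply H; lia).
  assert (0 <= f p) by (apply H; lia).
  destruct (Nat.eq_dec k p) as [->|Hne]; [lra|].
  assert (f k <= sum_lt p f) by (apply IH; [lia|intros; apply H; lia]). lra.
Qed.

Lemma sum_lt_sq_le p f : (sum_lt p f) ^ 2 <= INR p * sum_lt p (fun l => f l ^ 2).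
Proof.
  induction p as [|p IH]; [simpl; lra|].
  change (sum_lt (S p) f) with (sum_lt p f + f p).
  change (sum_lt (S p) (fun l => f l ^ 2)) with (sum_lt p (fun l => f l ^ 2) + f p ^ 2).
  rewrite S_INR.
  set (s := sum_lt p f) in *. set (q := sum_lt p (fun l => f l ^ 2)) in *. set (a := f p).
  assert (Hq : 0 <= q) by (apply sum_lt_nonneg; intros; apply pow2_ge_0).
  assert (HP : 0 <= INR p) by apply pos_INR.
  (* 2 s a <= q + p a^2, from (s - p a)^2 >= 0 and s^2 <= p q *)
  assert (Hcross : 2 * s * a <= q + INR p * a ^ 2).
  { destruct (Req_dec (INR p) 0) as [H0|H0].
    - assert (s = 0) by (rewrite H0 in IH; nra). subst s; nra.
    - assert (0 <= (s - INR p * a) ^ 2) by apply pow2_ge_0.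
      apply (Rmult_le_reg_l (INR p)); [lra|nra]. }
  nra.
Qed.

Lemma sum_lt_lin_bound p g a : (forall l, (l < p)%nat -> Rabs (a l) <= 1) ->
  Rabs (sum_lt p (fun l => g l * a l)) <= sum_lt p (fun l => Rabs (g l)).
Proof.
  induction p as [|p IH]; intros H; simpl sum_lt; [rewrite Rabs_R0; lra|].
  eapply Rle_trans; [apply Rabs_triang|]. apply Rplus_le_compat; [apply IH; intros; apply H; lia|].
  rewrite Rabs_mult. assert (Rabs (a p) <= 1) by (apply H; lia).
  pose proof (Rabs_pos (g p)). nra.
Qed.

Lemma prod_lt_ext p f g : (forall l, (l < p)%nat -> f l = g l) -> prod_lt p f = prod_lt p g.
Proof.
  induction p as [|p IH]; intros H; simpl; [reflexivity|].
  rewrite IH, H by (lia || (intros; apply H; lia)). reflexivity.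
Qed.

Lemma prod_lt_nonneg p f : (forall l, (l < p)%nat -> 0 <= f l) -> 0 <= prod_lt p f.
Proof.
  induction p as [|p IH]; intros H; simpl; [lra|].
  apply Rmult_le_pos; [apply IH; intros|]; apply H; lia.
Qed.

Lemma prod_lt_ones p : prod_lt p (fun _ => 1) = 1.
Proof. induction p as [|p IH]; simpl; [reflexivity|rewrite IH; ring]. Qed.

Lemma prod_lt_upd p k a f : (k < p)%nat ->
  prod_lt p (fun l => if Nat.eqb l k then a else f l)
  = prod_lt p (fun l => if Nat.eqb l k then 1 else f l) * a.
Proof.
  induction p as [|p IH]; intros Hk; [lia|]. simpl.
  destruct (Nat.eq_dec k p) as [->|Hne].
  - rewrite Nat.eqb_refl, (prod_lt_ext p _ f), (prod_lt_ext p (fun l => if Nat.eqb l p then 1 else f l) f).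
    + ring.
    + intros l Hl; destruct (Nat.eqb_spec l p); [lia|reflexivity].
    + intros l Hl; destruct (Nat.eqb_spec l p); [lia|reflexivity].
  - rewrite IH by lia. destruct (Nat.eqb_spec p k); [lia|ring].
Qed.

Lemma prod_lt_one_factor p j a : (j < p)%nat ->
  prod_lt p (fun l => if Nat.eqb l j then a else 1) = a.
Proof.
  intros Hj. rewrite prod_lt_upd by exact Hj.
  rewrite (prod_lt_ext p _ (fun _ => 1)), prod_lt_ones by (intros l _; destruct (Nat.eqb l j); reflexivity).
  ring.
Qed.

Lemma prod_lt_two_factors p j k a b : (j < p)%nat -> (k < p)%nat -> j <> k ->
  prod_lt p (fun l => if Nat.eqb l j then a else if Nat.eqb l k then b else 1) = a * b.
Proof.
  intros Hj Hk Hjk. rewrite prod_lt_upd by exact Hj.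
  rewrite (prod_lt_ext p _ (fun l => if Nat.eqb l k then b else 1)), prod_lt_one_factor.
  - ring.
  - exact Hk.
  - intros l _. destruct (Nat.eqb_spec l j), (Nat.eqb_spec l k); subst; tauto.
Qed.

(* One-dimensional Bernstein mean: the expectation of phi(i) for i ~ Binomial(m, t). *)
Definition bern_mean (m : nat) (t : R) (phi : nat -> R) : R :=
  sum_f_R0 (fun i => phi i * bern_b i m t) m.

Definition central_moment (m : nat) (t : R) (r : nat) : R :=
  bern_mean m t (fun i => (INR i - INR m * t) ^ r).

Lemma bern_mean_ext m t phi psi : (forall i, (i <= m)%nat -> phi i = psi i) ->
  bern_mean m t phi = bern_mean m t psi.
Proof. intros H; unfold bern_mean; apply sum_eq; intros i Hi; rewrite H; auto. Qed.

Lemma bern_mean_plus m t phi psi :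
  bern_mean m t (fun i => phi i + psi i) = bern_mean m t phi + bern_mean m t psi.
Proof. unfold bern_mean; rewrite <- sum_plus; apply sum_eq; intros; ring. Qed.

Lemma bern_mean_scal m t c phi : bern_mean m t (fun i => c * phi i) = c * bern_mean m t phi.
Proof. unfold bern_mean; rewrite scal_sum; apply sum_eq; intros; ring. Qed.

Lemma bern_mean_sum m t r (F : nat -> nat -> R) :
  bern_mean m t (fun i => sum_f_R0 (fun j => F j i) r) = sum_f_R0 (fun j => bern_mean m t (F j)) r.
Proof. induction r as [|r IH]; simpl; [reflexivity|]. rewrite bern_mean_plus, IH. reflexivity. Qed.

Lemma central_moment_shift m t s r :
  bern_mean m t (fun i => (INR i - INR m * t + s) ^ r)
  = sum_f_R0 (fun j => C r j * s ^ (r - j) * central_moment m t j) r.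
Proof.
  rewrite (bern_mean_ext m t _ (fun i => sum_f_R0 (fun j => C r j * s ^ (r - j) * (INR i - INR m * t) ^ j) r)).
  - rewrite bern_mean_sum. apply sum_eq; intros j _. unfold central_moment. rewrite <- bern_mean_scal. reflexivity.
  - intros i _. rewrite binomial. apply sum_eq; intros; ring.
Qed.

Lemma C_nn m : C m m = 1.
Proof. unfold C. rewrite Nat.sub_diag. simpl. field. apply INR_fact_neq_0. Qed.

Lemma C_n0 m : C m 0 = 1.
Proof. unfold C. rewrite Nat.sub_0_r. simpl. field. apply INR_fact_neq_0. Qed.

Lemma bern_b_pascal m j t : (j < m)%nat ->
  bern_b (S j) (S m) t = t * bern_b j m t + (1 - t) * bern_b (S j) m t.
Proof.
  intros H; unfold bern_b. rewrite <- pascal by exact H.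
  replace (S m - S j)%nat with (m - j)%nat by lia.
  replace (m - j)%nat with (S (m - S j)) by lia. simpl. ring.
Qed.

Lemma bern_mean_0 t phi : bern_mean 0 t phi = phi 0%nat.
Proof. unfold bern_mean, bern_b; simpl. rewrite C_n0. ring. Qed.

(* Pascal's rule for the weights: Binomial(m+1, t) = Binomial(m, t) + Bernoulli(t). *)
Lemma bern_mean_step m t phi :
  bern_mean (S m) t phi = t * bern_mean m t (fun i => phi (S i)) + (1 - t) * bern_mean m t phi.
Proof.
  unfold bern_mean. rewrite decomp_sum by lia. simpl pred.
  destruct m as [|m].
  { simpl. unfold bern_b. rewrite !C_nn, !C_n0. simpl. ring. }
  rewrite tech5, (decomp_sum (fun i => phi i * bern_b i (S m) t) (S m)) by lia. simpl pred.
  rewrite (tech5 (fun i => phi (S i) * bern_b i (S m) t)).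
  rewrite (sum_eq (fun i => phi (S i) * bern_b (S i) (S (S m)) t)
     (fun i => phi (S i) * bern_b i (S m) t * t + phi (S i) * bern_b (S i) (S m) t * (1 - t)))
    by (intros i Hi; rewrite bern_b_pascal by lia; ring).
  rewrite sum_plus, <- !scal_sum.
  replace (bern_b 0 (S (S m)) t) with ((1 - t) * bern_b 0 (S m) t)
    by (unfold bern_b; rewrite !C_n0; simpl; ring).
  replace (bern_b (S (S m)) (S (S m)) t) with (t * bern_b (S m) (S m) t)
    by (unfold bern_b; rewrite !C_nn, !Nat.sub_diag; simpl; ring).
  ring.
Qed.

(* Hence the recursion in m for central moments: the centre moves by 1 - t or by -t. *)
Lemma central_moment_step m t r :
  central_moment (S m) t r
  = t * sum_f_R0 (fun j => C r j * (1 - t) ^ (r - j) * central_moment m t j) r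
  + (1 - t) * sum_f_R0 (fun j => C r j * (- t) ^ (r - j) * central_moment m t j) r.
Proof.
  rewrite <- !central_moment_shift. unfold central_moment at 1. rewrite bern_mean_step.
  f_equal; f_equal; apply bern_mean_ext; intros; rewrite !S_INR; f_equal; ring.
Qed.

(* Closed forms of the central moments of order <= 4 (order 3 is needed for the induction). *)
Lemma central_moments m t :
  central_moment m t 0 = 1 /\ central_moment m t 1 = 0 /\
  central_moment m t 2 = INR m * (t * (1 - t)) /\
  central_moment m t 3 = INR m * (t * (1 - t)) * (1 - 2 * t) /\
  central_moment m t 4 = 3 * INR m ^ 2 * (t * (1 - t)) ^ 2
                         + INR m * (t * (1 - t)) * (1 - 6 * (t * (1 - t))).
Proof.
  induction m as [|m (H0 & H1 & H2 & H3 & H4)].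
  { unfold central_moment; rewrite !bern_mean_0; simpl; repeat split; ring. }
  rewrite !central_moment_step. simpl sum_f_R0. rewrite H0, H1, H2, H3, H4, S_INR.
  unfold C; simpl. repeat split; field.
Qed.

Lemma bern_mean_one m t : bern_mean m t (fun _ => 1) = 1.
Proof.
  unfold bern_mean. transitivity ((t + (1 - t)) ^ m).
  - rewrite binomial. apply sum_eq. intros; unfold bern_b; ring.
  - replace (t + (1 - t)) with 1 by ring. apply pow1.
Qed.

Lemma bern_mean_centered m t : (1 <= m)%nat -> bern_mean m t (fun i => INR i / INR m - t) = 0.
Proof.
  intros Hm. assert (0 < INR m) by (apply lt_0_INR; lia).
  destruct (central_moments m t) as (_ & H1 & _). unfold central_moment in H1.
  rewrite (bern_mean_ext m t _ (fun i => / INR m * (INR i - INR m * t) ^ 1)).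
  - rewrite bern_mean_scal, H1. ring.
  - intros; simpl; field; lra.
Qed.

Lemma bern_mean_variance m t : (1 <= m)%nat ->
  bern_mean m t (fun i => (INR i / INR m - t) ^ 2) = t * (1 - t) / INR m.
Proof.
  intros Hm. assert (0 < INR m) by (apply lt_0_INR; lia).
  destruct (central_moments m t) as (_ & _ & H2 & _). unfold central_moment in H2.
  rewrite (bern_mean_ext m t _ (fun i => (/ INR m) ^ 2 * (INR i - INR m * t) ^ 2)).
  - rewrite bern_mean_scal, H2. field; lra.
  - intros; simpl; field; lra.
Qed.

Lemma bern_mean_fourth_moment m t : (1 <= m)%nat -> 0 <= t <= 1 ->
  bern_mean m t (fun i => (INR i / INR m - t) ^ 4) <= 1 / INR m ^ 2.
Proof.
  intros Hm Ht. assert (HM : 1 <= INR m) by (apply (le_INR 1); lia).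
  destruct (central_moments m t) as (_ & _ & _ & _ & H4). unfold central_moment in H4.
  rewrite (bern_mean_ext m t _ (fun i => (/ INR m) ^ 4 * (INR i - INR m * t) ^ 4))
    by (intros; simpl; field; lra).
  rewrite bern_mean_scal, H4.
  set (s := t * (1 - t)). set (M := INR m) in *.
  assert (Hs : 0 <= s <= 1 / 4) by (unfold s; pose proof (pow2_ge_0 (t - 1 / 2)); split; nra).
  replace (1 / M ^ 2) with ((/ M) ^ 4 * M ^ 2) by (field; lra).
  apply Rmult_le_compat_l; [apply pow_le; left; apply Rinv_0_lt_compat; lra|].
  assert (s ^ 2 <= 1 / 16) by nra. assert (M * s <= M ^ 2 / 4) by nra. nra.
Qed.

(* [ins i n a] extends a multi-index on the first [n] coordinates by [a] in coordinate [n];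
   this is how [msum] unfolds one coordinate at a time. *)
Definition ins (i : nat -> nat) (n a : nat) : nat -> nat :=
  fun k => if Nat.eqb k n then a else i k.

Definition bounded_index (n m : nat) (i : nat -> nat) : Prop := forall l, (l < n)%nat -> (i l <= m)%nat.

Lemma msum_S n m F : msum (S n) m F = sum_f_R0 (fun a => msum n m (fun i => F (ins i n a))) m.
Proof. reflexivity. Qed.

Lemma ins_bounded n m i a : bounded_index n m i -> (a <= m)%nat -> bounded_index (S n) m (ins i n a).
Proof. intros Hi Ha l Hl. unfold ins. destruct (Nat.eqb_spec l n); [lia|apply Hi; lia]. Qed.

Lemma msum_ext n m F G : (forall i, bounded_index n m i -> F i = G i) -> msum n m F = msum n m G.
Proof.
  revert F G; induction n as [|n IH]; intros F G H.
  - apply H. intros l Hl; lia.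
  - rewrite !msum_S. apply sum_eq. intros a Ha. apply IH. intros i Hi. apply H, ins_bounded; auto.
Qed.

Lemma msum_le n m F G : (forall i, bounded_index n m i -> F i <= G i) -> msum n m F <= msum n m G.
Proof.
  revert F G; induction n as [|n IH]; intros F G H.
  - apply H. intros l Hl; lia.
  - rewrite !msum_S. apply sum_Rle. intros a Ha. apply IH. intros i Hi. apply H, ins_bounded; auto.
Qed.

Lemma msum_plus n m F G : msum n m (fun i => F i + G i) = msum n m F + msum n m G.
Proof.
  revert F G; induction n as [|n IH]; intros F G; [reflexivity|].
  rewrite !msum_S, <- sum_plus. apply sum_eq; intros. apply IH.
Qed.

Lemma msum_scal n m c F : msum n m (fun i => c * F i) = c * msum n m F.
Proof.
  revert F; induction n as [|n IH]; intros F; [reflexivity|].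
  rewrite !msum_S, scal_sum. apply sum_eq; intros. rewrite IH. ring.
Qed.

Lemma msum_abs n m F : Rabs (msum n m F) <= msum n m (fun i => Rabs (F i)).
Proof.
  revert F; induction n as [|n IH]; intros F; [simpl; lra|].
  rewrite !msum_S. eapply Rle_trans; [apply Rsum_abs|]. apply sum_Rle. intros; apply IH.
Qed.

Lemma msum_sum_lt n m p G :
  msum n m (fun i => sum_lt p (fun l => G l i)) = sum_lt p (fun l => msum n m (G l)).
Proof.
  induction p as [|p IH]; simpl.
  - transitivity (0 * msum n m (fun _ => 0)); [|ring].
    rewrite <- msum_scal. apply msum_ext; intros; ring.
  - rewrite msum_plus, IH. reflexivity.
Qed.

Lemma bern_b_nonneg i m t : 0 <= t <= 1 -> 0 <= bern_b i m t.
Proof.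
  intros Ht. unfold bern_b. apply Rmult_le_pos; [apply Rmult_le_pos|apply pow_le; lra].
  - unfold C. left. apply Rdiv_lt_0_compat; [|apply Rmult_lt_0_compat]; apply INR_fact_lt_0.
  - apply pow_le; lra.
Qed.

Lemma bern_B_nonneg n m i y : in_cube n y -> 0 <= bern_B n m i y.
Proof. intros Hy. apply prod_lt_nonneg. intros k Hk. apply bern_b_nonneg, Hy, Hk. Qed.

Lemma bern_B_ins n m i a y : bern_B (S n) m (ins i n a) y = bern_B n m i y * bern_b a m (y n).
Proof.
  unfold bern_B. simpl. unfold ins at 2. rewrite Nat.eqb_refl. f_equal.
  apply prod_lt_ext. intros k Hk. unfold ins. destruct (Nat.eqb_spec k n); [lia|reflexivity].
Qed.

(* Independence of the coordinates: under the product weights [bern_B n m i y], the mean of a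
   product of functions of the single coordinates [i l] is the product of one-dimensional means. *)
Lemma msum_product n m y (h : nat -> nat -> R) :
  msum n m (fun i => prod_lt n (fun l => h l (i l)) * bern_B n m i y)
  = prod_lt n (fun l => bern_mean m (y l) (h l)).
Proof.
  induction n as [|n IH]; [unfold bern_B; simpl; ring|]. rewrite msum_S. simpl prod_lt.
  rewrite <- IH. unfold bern_mean. rewrite scal_sum. apply sum_eq. intros a _.
  rewrite <- msum_scal. apply msum_ext. intros i _.
  rewrite bern_B_ins. unfold ins at 2. rewrite Nat.eqb_refl.
  rewrite (prod_lt_ext n (fun l => h l (ins i n a l)) (fun l => h l (i l))).
  - ring.
  - intros l Hl. unfold ins. destruct (Nat.eqb_spec l n); [lia|reflexivity].
Qed.

Lemma msum_marginal n m y phi j : (j < n)%nat ->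
  msum n m (fun i => phi (i j) * bern_B n m i y) = bern_mean m (y j) phi.
Proof.
  intros Hj. set (h := fun l => if Nat.eqb l j then phi else fun _ : nat => 1).
  transitivity (prod_lt n (fun l => bern_mean m (y l) (h l))).
  - rewrite <- msum_product. apply msum_ext. intros i _. f_equal.
    rewrite <- (prod_lt_one_factor n j (phi (i j))) by exact Hj.
    apply prod_lt_ext. intros l _. unfold h. destruct (Nat.eqb_spec l j); subst; reflexivity.
  - rewrite <- (prod_lt_one_factor n j (bern_mean m (y j) phi)) by exact Hj.
    apply prod_lt_ext. intros l _. unfold h. destruct (Nat.eqb_spec l j); subst; [reflexivity|].
    apply bern_mean_one.
Qed.

Lemma msum_marginal2 n m y phi psi j k : (j < n)%nat -> (k < n)%nat -> j <> k ->
  msum n m (fun i => phi (i j) * psi (i k) * bern_B n m i y)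
  = bern_mean m (y j) phi * bern_mean m (y k) psi.
Proof.
  intros Hj Hk Hjk.
  set (h := fun l => if Nat.eqb l j then phi else if Nat.eqb l k then psi else fun _ : nat => 1).
  transitivity (prod_lt n (fun l => bern_mean m (y l) (h l))).
  - rewrite <- msum_product. apply msum_ext. intros i _. f_equal.
    rewrite <- (prod_lt_two_factors n j k (phi (i j)) (psi (i k))) by auto.
    apply prod_lt_ext. intros l _. unfold h.
    destruct (Nat.eqb_spec l j), (Nat.eqb_spec l k); subst; reflexivity.
  - rewrite <- (prod_lt_two_factors n j k (bern_mean m (y j) phi) (bern_mean m (y k) psi)) by auto.
    apply prod_lt_ext. intros l _. unfold h.
    destruct (Nat.eqb_spec l j), (Nat.eqb_spec l k); subst; try reflexivity.
    apply bern_mean_one.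
Qed.

Lemma bern_b_derivative i m t : (i <= m)%nat -> 0 < t < 1 ->
  derivable_pt_lim (fun s => bern_b i m s) t (bern_b i m t * (INR i - INR m * t) / (t * (1 - t))).
Proof.
  intros Hi Ht.
  assert (Hd : derivable_pt_lim (fun s => bern_b i m s) t
     (C m i * (INR i * t ^ pred i * (1 - t) ^ (m - i)
               + t ^ i * (INR (m - i) * (1 - t) ^ pred (m - i) * (0 - 1))))).
  { apply (derivable_pt_lim_ext
      (mult_real_fct (C m i) (mult_fct (fun s => s ^ i) (comp (fun s => s ^ (m - i)) (fun s => 1 - s))))).
    { intros s. unfold bern_b, mult_real_fct, mult_fct, comp. ring. }
    apply derivable_pt_lim_scal, derivable_pt_lim_mult; [apply derivable_pt_lim_pow|].
    apply derivable_pt_lim_comp; [|apply derivable_pt_lim_pow].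
    apply (derivable_pt_lim_minus (fct_cte 1) id);
      [apply derivable_pt_lim_const|apply derivable_pt_lim_id]. }
  (* multiply by t (1 - t) to absorb the lowered exponents *)
  assert (Hpred : forall a u, INR a * u ^ pred a * u = INR a * u ^ a) by (intros [|a] u; simpl; ring).
  replace (bern_b i m t * (INR i - INR m * t) / (t * (1 - t))) with
    (C m i * (INR i * t ^ pred i * (1 - t) ^ (m - i)
              + t ^ i * (INR (m - i) * (1 - t) ^ pred (m - i) * (0 - 1)))); [exact Hd|].
  apply (Rmult_eq_reg_r (t * (1 - t))); [|apply Rgt_not_eq, Rmult_lt_0_compat; lra].
  transitivity (C m i * ((INR i * t ^ pred i * t) * (1 - t) ^ (m - i) * (1 - t)
       - t ^ i * t * (INR (m - i) * (1 - t) ^ pred (m - i) * (1 - t)))); [ring|].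
  rewrite !Hpred, minus_INR by exact Hi. unfold bern_b. field. lra.
Qed.

Lemma sum_f_R0_derivative (G : nat -> R -> R) G' m t :
  (forall j, (j <= m)%nat -> derivable_pt_lim (G j) t (G' j)) ->
  derivable_pt_lim (fun s => sum_f_R0 (fun j => G j s) m) t (sum_f_R0 G' m).
Proof.
  induction m as [|m IH]; intros H; simpl; [apply H; lia|].
  apply (derivable_pt_lim_plus (fun s => sum_f_R0 (fun j => G j s) m) (G (S m)));
    [apply IH; intros; apply H|apply H]; lia.
Qed.

Lemma msum_derivative n m (G : (nat -> nat) -> R -> R) G' t :
  (forall i, bounded_index n m i -> derivable_pt_lim (G i) t (G' i)) ->
  derivable_pt_lim (fun s => msum n m (fun i => G i s)) t (msum n m G').
Proof.
  revert G G'. induction n as [|n IH]; intros G G' H; [apply H; intros l Hl; lia|].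
  rewrite msum_S.
  apply (sum_f_R0_derivative (fun a s => msum n m (fun i => G (ins i n a) s))).
  intros a Ha. apply (IH (fun i => G (ins i n a))). intros i Hi. apply H, ins_bounded; auto.
Qed.

Definition grid_point (m : nat) (i : nat -> nat) : nat -> R := fun l => INR (i l) / INR m.

Lemma grid_point_in_cube n m i : (1 <= m)%nat -> bounded_index n m i -> in_cube n (grid_point m i).
Proof.
  intros Hm Hi l Hl. unfold grid_point. assert (0 < INR m) by (apply lt_0_INR; lia).
  assert (INR (i l) <= INR m) by (apply le_INR, Hi, Hl). pose proof (pos_INR (i l)).
  split; [apply Rmult_le_pos; [lra|left; apply Rinv_0_lt_compat; lra]|].
  apply (Rmult_le_reg_r (INR m)); [lra|]. field_simplify; lra.
Qed.

Definition bern_B_except (n m k : nat) (i : nat -> nat) (x : nat -> R) : R :=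
  prod_lt n (fun l => if Nat.eqb l k then 1 else bern_b (i l) m (x l)).

Lemma bern_B_upd n m k i x t : (k < n)%nat ->
  bern_B n m i (upd x k t) = bern_B_except n m k i x * bern_b (i k) m t.
Proof.
  intros Hk. unfold bern_B, bern_B_except. rewrite <- prod_lt_upd by exact Hk.
  apply prod_lt_ext. intros l Hl. unfold upd. destruct (Nat.eqb_spec l k); subst; reflexivity.
Qed.

Lemma bern_B_split n m k i x : (k < n)%nat ->
  bern_B n m i x = bern_B_except n m k i x * bern_b (i k) m (x k).
Proof.
  intros Hk. rewrite <- bern_B_upd by exact Hk. unfold bern_B. apply prod_lt_ext.
  intros l _. unfold upd. destruct (Nat.eqb_spec l k); subst; reflexivity.
Qed.

Definition bernstein_partial (n m : nat) (f : (nat -> R) -> R) (x : nat -> R) (k : nat) : R :=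
  msum n m (fun i => f (grid_point m i) * bern_B n m i x * (INR (i k) - INR m * x k))
  / (x k * (1 - x k)).

Lemma bernstein_partial_derivative n m f x k : (k < n)%nat -> 0 < x k < 1 ->
  derivable_pt_lim (fun t => bernstein n m f (upd x k t)) (x k) (bernstein_partial n m f x k).
Proof.
  intros Hk Hx. unfold bernstein_partial.
  apply (derivable_pt_lim_ext
    (fun t => msum n m (fun i => f (grid_point m i) * bern_B_except n m k i x * bern_b (i k) m t))).
  { intros t. unfold bernstein. apply msum_ext. intros i _. rewrite bern_B_upd by exact Hk.
    unfold grid_point. ring. }
  replace (msum n m (fun i => f (grid_point m i) * bern_B n m i x * (INR (i k) - INR m * x k))
           / (x k * (1 - x k)))
    with (msum n m (fun i => f (grid_point m i) * bern_B_except n m k i x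
           * (bern_b (i k) m (x k) * (INR (i k) - INR m * x k) / (x k * (1 - x k))))).
  - apply msum_derivative. intros i Hi.
    apply derivable_pt_lim_scal, bern_b_derivative; [apply Hi, Hk|exact Hx].
  - unfold Rdiv. rewrite (Rmult_comm (msum n m _)), <- msum_scal. apply msum_ext. intros i _.
    rewrite (bern_B_split n m k i x) by exact Hk. ring.
Qed.

Definition sq_dist (n : nat) (x y : nat -> R) : R := sum_lt n (fun l => (y l - x l) ^ 2).
Definition quartic_dist (n : nat) (x y : nat -> R) : R := sum_lt n (fun l => (y l - x l) ^ 4).

Lemma msum_grid_coordinate n m x phi l : (l < n)%nat ->
  msum n m (fun i => phi (grid_point m i l) * bern_B n m i x)
  = bern_mean m (x l) (fun a => phi (INR a / INR m)).
Proof. intros Hl. apply (msum_marginal n m x (fun a => phi (INR a / INR m)) l Hl). Qed.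

Lemma grid_first_moment n m x k : (k < n)%nat -> (1 <= m)%nat ->
  msum n m (fun i => (grid_point m i k - x k) * bern_B n m i x) = 0.
Proof.
  intros Hk Hm. rewrite (msum_grid_coordinate n m x (fun u => u - x k)) by exact Hk.
  apply bern_mean_centered, Hm.
Qed.

(* E[(g . (y - x)) (y_k - x_k)] = g_k x_k (1 - x_k) / m: only the diagonal covariance survives. *)
Lemma grid_second_moment n m x k g : (k < n)%nat -> (1 <= m)%nat ->
  msum n m (fun i => sum_lt n (fun l => g l * (grid_point m i l - x l))
                     * (grid_point m i k - x k) * bern_B n m i x)
  = g k * (x k * (1 - x k) / INR m).
Proof.
  intros Hk Hm.
  rewrite (msum_ext n m _ (fun i => sum_lt n (fun l =>
      g l * ((grid_point m i l - x l) * (grid_point m i k - x k) * bern_B n m i x)))).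
  2:{ intros i _. rewrite Rmult_assoc, sum_lt_mulr. apply sum_lt_ext; intros; ring. }
  rewrite msum_sum_lt, (sum_lt_single n k); [| exact Hk |].
  - rewrite msum_scal. f_equal.
    rewrite (msum_ext n m _ (fun i => (grid_point m i k - x k) ^ 2 * bern_B n m i x)) by (intros; ring).
    rewrite (msum_grid_coordinate n m x (fun u => (u - x k) ^ 2)) by exact Hk.
    apply bern_mean_variance, Hm.
  - intros l Hl Hlk. rewrite msum_scal. unfold grid_point.
    rewrite (msum_marginal2 n m x (fun a => INR a / INR m - x l) (fun a => INR a / INR m - x k) l k)
      by auto.
    rewrite (bern_mean_centered m (x k)) by exact Hm. ring.
Qed.

Lemma grid_sq_dist_mean n m x : (1 <= m)%nat -> in_cube n x ->
  msum n m (fun i => sq_dist n x (grid_point m i) * bern_B n m i x) <= INR n * (1 / INR m).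
Proof.
  intros Hm Hx. assert (0 < INR m) by (apply lt_0_INR; lia).
  unfold sq_dist. rewrite (msum_ext n m _ (fun i => sum_lt n (fun l =>
      (grid_point m i l - x l) ^ 2 * bern_B n m i x))) by (intros; apply sum_lt_mulr).
  rewrite msum_sum_lt, <- sum_lt_const. apply sum_lt_le. intros l Hl.
  rewrite (msum_grid_coordinate n m x (fun u => (u - x l) ^ 2)), bern_mean_variance by auto.
  destruct (Hx l Hl). unfold Rdiv. apply Rmult_le_compat_r; [left; apply Rinv_0_lt_compat; lra|nra].
Qed.

Lemma grid_quartic_dist_mean n m x : (1 <= m)%nat -> in_cube n x ->
  msum n m (fun i => quartic_dist n x (grid_point m i) * bern_B n m i x) <= INR n * (1 / INR m ^ 2).
Proof.
  intros Hm Hx. unfold quartic_dist.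
  rewrite (msum_ext n m _ (fun i => sum_lt n (fun l =>
      (grid_point m i l - x l) ^ 4 * bern_B n m i x))) by (intros; apply sum_lt_mulr).
  rewrite msum_sum_lt, <- sum_lt_const. apply sum_lt_le. intros l Hl.
  rewrite (msum_grid_coordinate n m x (fun u => (u - x l) ^ 4)) by exact Hl.
  apply bern_mean_fourth_moment; auto.
Qed.

Lemma grid_remainder_mean n m x k (Rf : (nat -> R) -> R) eps K :
  (1 <= m)%nat -> in_cube n x -> 0 <= eps -> 0 <= K ->
  (forall y, in_cube n y -> Rabs (Rf y) * Rabs (y k - x k) <= eps * sq_dist n x y + K * quartic_dist n x y) ->
  Rabs (msum n m (fun i => Rf (grid_point m i) * (grid_point m i k - x k) * bern_B n m i x))
   <= eps * (INR n * (1 / INR m)) + K * (INR n * (1 / INR m ^ 2)).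
Proof.
  intros Hm Hx He HK Hr.
  eapply Rle_trans; [apply msum_abs|].
  eapply Rle_trans; [apply (msum_le n m _ (fun i =>
      eps * (sq_dist n x (grid_point m i) * bern_B n m i x)
      + K * (quartic_dist n x (grid_point m i) * bern_B n m i x)))|].
  - intros i Hi. pose proof (bern_B_nonneg n m i x Hx).
    rewrite !Rabs_mult, (Rabs_pos_eq (bern_B _ _ _ _)) by auto.
    pose proof (Hr (grid_point m i) (grid_point_in_cube n m i Hm Hi)). nra.
  - rewrite msum_plus, !msum_scal.
    apply Rplus_le_compat; apply Rmult_le_compat_l; auto.
    + apply grid_sq_dist_mean; auto.
    + apply grid_quartic_dist_mean; auto.
Qed.

Definition frechet_remainder (n : nat) (f : (nat -> R) -> R) (x : nat -> R) (g : nat -> R)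
  (y : nat -> R) : R :=
  f y - f x - sum_lt n (fun j => g j * (y j - x j)).

Lemma frechet_remainder_bounded n f x g M : in_cube n x ->
  (forall y, in_cube n y -> Rabs (f y) <= M) ->
  forall y, in_cube n y ->
  Rabs (frechet_remainder n f x g y) <= 2 * M + sum_lt n (fun j => Rabs (g j)).
Proof.
  intros Hx HM y Hy. unfold frechet_remainder.
  assert (Rabs (sum_lt n (fun j => g j * (y j - x j))) <= sum_lt n (fun j => Rabs (g j))).
  { apply sum_lt_lin_bound. intros j Hj. destruct (Hy j Hj), (Hx j Hj). apply Rabs_le; lra. }
  pose proof (HM y Hy). pose proof (HM x Hx).
  pose proof (Rabs_triang (f y - f x) (- sum_lt n (fun j => g j * (y j - x j)))).
  pose proof (Rabs_triang (f y) (- f x)). rewrite Rabs_Ropp in *. unfold Rminus in *. lra.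
Qed.

(* Splitting the cube into a small ball around x, where the remainder is o(|y - x|), and its
   complement, where |y - x|^2 >= d^2 makes sum (y_l - x_l)^4 >= d^4 / n large. *)
Lemma remainder_pointwise_bound n x k (Rf : (nat -> R) -> R) Mp eps d :
  (k < n)%nat -> in_cube n x -> 0 <= eps -> 0 < d -> 0 <= Mp ->
  (forall y, in_cube n y -> norm_n n (fun j => y j - x j) < d ->
     Rabs (Rf y) <= eps * norm_n n (fun j => y j - x j)) ->
  (forall y, in_cube n y -> Rabs (Rf y) <= Mp) ->
  forall y, in_cube n y ->
  Rabs (Rf y) * Rabs (y k - x k) <= eps * sq_dist n x y + (Mp * INR n / d ^ 4) * quartic_dist n x y.
Proof.
  intros Hk Hx He Hd HM Hnear Hfar y Hy.
  assert (Hsq : 0 <= sq_dist n x y) by (apply sum_lt_nonneg; intros; apply pow2_ge_0).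
  assert (Hqu : 0 <= quartic_dist n x y)
    by (apply sum_lt_nonneg; intros l _; replace ((y l - x l) ^ 4) with (((y l - x l) ^ 2) ^ 2) by ring;
        apply pow2_ge_0).
  assert (Hd4 : 0 < d ^ 4) by (apply pow_lt, Hd).
  assert (HK : 0 <= Mp * INR n / d ^ 4)
    by (apply Rmult_le_pos; [apply Rmult_le_pos; [exact HM|apply pos_INR]|left; apply Rinv_0_lt_compat, Hd4]).
  change (norm_n n (fun j => y j - x j)) with (sqrt (sq_dist n x y)) in Hnear.
  assert (Hyk : Rabs (y k - x k) <= sqrt (sq_dist n x y)).
  { rewrite <- sqrt_Rsqr_abs. apply sqrt_le_1_alt. rewrite Rsqr_pow2.
    apply (sum_lt_term_le n (fun l => (y l - x l) ^ 2) k Hk). intros; apply pow2_ge_0. }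
  pose proof (Rabs_pos (Rf y)). pose proof (Rabs_pos (y k - x k)). pose proof (sqrt_pos (sq_dist n x y)).
  pose proof (Rmult_le_pos _ _ HK Hqu). pose proof (Rmult_le_pos _ _ He Hsq).
  destruct (Rlt_or_le (sqrt (sq_dist n x y)) d) as [Hlt|Hge].
  - pose proof (Hnear y Hy Hlt).
    assert (Rabs (Rf y) * Rabs (y k - x k) <= eps * sqrt (sq_dist n x y) * sqrt (sq_dist n x y))
      by (apply Rmult_le_compat; auto).
    rewrite Rmult_assoc, sqrt_sqrt in * by exact Hsq. lra.
  - (* far from x: Cauchy-Schwarz gives d^4 <= |y - x|^4 <= n sum (y_l - x_l)^4 *)
    assert (Hd2 : d ^ 2 <= sq_dist n x y) by (rewrite <- (sqrt_sqrt (sq_dist n x y)) by exact Hsq; simpl; nra).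
    assert (Hcs : sq_dist n x y ^ 2 <= INR n * quartic_dist n x y).
    { unfold sq_dist, quartic_dist. eapply Rle_trans; [apply (sum_lt_sq_le n (fun l => (y l - x l) ^ 2))|].
      right. f_equal. apply sum_lt_ext. intros; ring. }
    assert (H4 : d ^ 4 <= INR n * quartic_dist n x y).
    { replace (d ^ 4) with ((d ^ 2) ^ 2) by ring. eapply Rle_trans; [|exact Hcs].
      apply pow_incr. split; [apply pow2_ge_0|exact Hd2]. }
    assert (Rabs (y k - x k) <= 1) by (destruct (Hy k Hk), (Hx k Hk); apply Rabs_le; lra).
    assert (Rabs (Rf y) * Rabs (y k - x k) <= Mp) by (pose proof (Hfar y Hy); nra).
    assert (Mp <= Mp * INR n / d ^ 4 * quartic_dist n x y).
    { replace (Mp * INR n / d ^ 4 * quartic_dist n x y) with (Mp * ((INR n * quartic_dist n x y) / d ^ 4))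
        by (field; lra).
      rewrite <- (Rmult_1_r Mp) at 1. apply Rmult_le_compat_l; [exact HM|].
      apply (Rmult_le_reg_r (d ^ 4)); [exact Hd4|]. field_simplify; lra. }
    lra.
Qed.

Definition frechet_derivative_at (n : nat) (f : (nat -> R) -> R) (x : nat -> R) (g : nat -> R) : Prop :=
  forall eps, 0 < eps -> exists delta, 0 < delta /\
    forall y, in_cube n y -> norm_n n (fun j => y j - x j) < delta ->
      Rabs (frechet_remainder n f x g y) <= eps * norm_n n (fun j => y j - x j).

Lemma upd_offset_norm n x k h : (k < n)%nat ->
  norm_n n (fun j => upd x k (x k + h) j - x j) = Rabs h.
Proof.
  intros Hk. unfold norm_n. rewrite (sum_lt_single n k); [| exact Hk |].
  - unfold upd. rewrite Nat.eqb_refl. replace (x k + h - x k) with h by ring.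
    rewrite <- Rsqr_pow2. apply sqrt_Rsqr_abs.
  - intros l _ Hlk. unfold upd. destruct (Nat.eqb_spec l k); [lia|ring].
Qed.

Lemma upd_offset_linear n x k h g : (k < n)%nat ->
  sum_lt n (fun j => g j * (upd x k (x k + h) j - x j)) = g k * h.
Proof.
  intros Hk. rewrite (sum_lt_single n k); [| exact Hk |].
  - unfold upd. rewrite Nat.eqb_refl. ring.
  - intros l _ Hlk. unfold upd. destruct (Nat.eqb_spec l k); [lia|ring].
Qed.

Lemma frechet_partial_derivative n f x g k : (k < n)%nat ->
  depends_on_first n f -> in_open_cube n x -> frechet_derivative_at n f x g ->
  derivable_pt_lim (fun t => f (upd x k t)) (x k) (g k).
Proof.
  intros Hk Hdep Hx Hg eps He.
  destruct (Hg (eps / 2)) as [d [Hd Hnear]]; [lra|].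
  destruct (Hx k Hk) as [Hx0 Hx1].
  assert (Hpos : 0 < Rmin d (Rmin (x k) (1 - x k))) by (repeat apply Rmin_pos; lra).
  exists (mkposreal _ Hpos). intros h Hh0 Hh. simpl in Hh.
  pose proof (Rmin_l d (Rmin (x k) (1 - x k))). pose proof (Rmin_r d (Rmin (x k) (1 - x k))).
  pose proof (Rmin_l (x k) (1 - x k)). pose proof (Rmin_r (x k) (1 - x k)).
  assert (Hhd : Rabs h < d) by lra.
  set (y := upd x k (x k + h)).
  assert (Hy : in_cube n y).
  { intros l Hl. unfold y, upd. destruct (Nat.eqb_spec l k) as [->|].
    - pose proof (Rle_abs h). pose proof (Rle_abs (- h)). rewrite Rabs_Ropp in *. lra.
    - destruct (Hx l Hl); lra. }
  assert (Hfx : f (upd x k (x k)) = f x).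
  { apply Hdep. intros j _. unfold upd. destruct (Nat.eqb_spec j k); subst; reflexivity. }
  pose proof (Hnear y Hy) as Hb. unfold frechet_remainder, y in Hb.
  rewrite upd_offset_norm, upd_offset_linear in Hb by exact Hk. specialize (Hb Hhd).
  rewrite Hfx. fold y in Hb |- *.
  assert (Hha : 0 < Rabs h) by (apply Rabs_pos_lt, Hh0).
  replace ((f y - f x) / h - g k) with ((f y - f x - g k * h) / h) by (field; exact Hh0).
  unfold Rdiv. rewrite Rabs_mult, Rabs_inv.
  apply (Rmult_lt_reg_r (Rabs h)); [exact Hha|]. rewrite Rmult_assoc, Rinv_l by lra. nra.
Qed.

(* Taylor-expanding f at x inside the Bernstein sum: the constant term has zero first moment,
   the linear term contributes exactly g_k, and only the remainder is left. *)
Lemma bernstein_partial_expansion n m f x g k : (k < n)%nat -> (1 <= m)%nat -> 0 < x k < 1 ->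
  bernstein_partial n m f x k
  = g k + INR m / (x k * (1 - x k))
          * msum n m (fun i => frechet_remainder n f x g (grid_point m i)
                               * (grid_point m i k - x k) * bern_B n m i x).
Proof.
  intros Hk Hm Hx. assert (0 < INR m) by (apply lt_0_INR; lia).
  unfold bernstein_partial.
  rewrite (msum_ext n m _ (fun i => INR m * (f x * ((grid_point m i k - x k) * bern_B n m i x)
      + sum_lt n (fun l => g l * (grid_point m i l - x l)) * (grid_point m i k - x k) * bern_B n m i x
      + frechet_remainder n f x g (grid_point m i) * (grid_point m i k - x k) * bern_B n m i x))).
  2:{ intros i _. replace (INR (i k) - INR m * x k) with (INR m * (grid_point m i k - x k))
        by (unfold grid_point; field; lra).
      unfold frechet_remainder. ring. }
  rewrite msum_scal, !msum_plus, msum_scal, grid_first_moment, grid_second_moment by auto.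
  field. split; lra.
Qed.

Lemma bernstein_partial_error n f x g k M : (k < n)%nat -> in_open_cube n x ->
  (forall y, in_cube n y -> Rabs (f y) <= M) -> frechet_derivative_at n f x g ->
  forall e, 0 < e -> exists K, 0 <= K /\
    forall m, (1 <= m)%nat -> Rabs (bernstein_partial n m f x k - g k) <= e + K / INR m.
Proof.
  intros Hk Hx HM Hg e He.
  assert (Hxc : in_cube n x) by (intros j Hj; destruct (Hx j Hj); lra).
  destruct (Hx k Hk) as [Hx0 Hx1].
  set (c := x k * (1 - x k)). assert (Hc : 0 < c) by (unfold c; nra).
  assert (Hn : 0 < INR n) by (apply lt_0_INR; lia).
  set (Mp := 2 * M + sum_lt n (fun j => Rabs (g j))).
  assert (HMp : 0 <= Mp).
  { pose proof (HM x Hxc). pose proof (Rabs_pos (f x)).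
    pose proof (sum_lt_nonneg n (fun j => Rabs (g j)) (fun j _ => Rabs_pos (g j))). unfold Mp; lra. }
  set (e1 := e * c / INR n). assert (He1 : 0 < e1) by (apply Rdiv_lt_0_compat; nra).
  destruct (Hg e1 He1) as [d [Hd Hnear]].
  set (K := Mp * INR n / d ^ 4).
  assert (HK : 0 <= K)
    by (apply Rmult_le_pos; [nra|left; apply Rinv_0_lt_compat, pow_lt, Hd]).
  exists (K * INR n / c). split; [apply Rmult_le_pos; [nra|left; apply Rinv_0_lt_compat, Hc]|].
  intros m Hm. assert (0 < INR m) by (apply lt_0_INR; lia).
  rewrite (bernstein_partial_expansion n m f x g k) by auto. fold c.
  replace (g k + _ - g k) with (INR m / c * msum n m (fun i => frechet_remainder n f x g (grid_point m i)
      * (grid_point m i k - x k) * bern_B n m i x)) by ring.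
  rewrite Rabs_mult, Rabs_pos_eq by (apply Rlt_le, Rdiv_lt_0_compat; auto).
  eapply Rle_trans.
  - apply Rmult_le_compat_l; [apply Rlt_le, Rdiv_lt_0_compat; auto|].
    apply (grid_remainder_mean n m x k _ e1 K); [lia|exact Hxc|lra|exact HK|].
    apply remainder_pointwise_bound; [exact Hk|exact Hxc|lra|exact Hd|exact HMp|exact Hnear|].
    apply frechet_remainder_bounded; assumption.
  - right. unfold e1. field. split; lra.
Qed.

Lemma Un_cv_of_error_bounds (u : nat -> R) (L : R) :
  (forall e, 0 < e -> exists K, 0 <= K /\ forall m, (1 <= m)%nat -> Rabs (u m - L) <= e + K / INR m) ->
  Un_cv u L.
Proof.
  intros H eps Heps.
  destruct (H (eps / 2)) as [K [HK Hu]]; [lra|].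
  destruct (INR_unbounded (2 * K / eps)) as [N HN].
  exists (max N 1). intros m Hm. unfold R_dist.
  assert (Hm1 : (1 <= m)%nat) by lia. assert (Hmpos : 0 < INR m) by (apply lt_0_INR; lia).
  assert (HNm : INR N <= INR m) by (apply le_INR; lia).
  assert (K / INR m < eps / 2).
  { apply (Rmult_lt_reg_r (INR m)); [exact Hmpos|].
    replace (K / INR m * INR m) with K by (field; lra).
    assert (2 * K / eps * eps < INR m * eps) by (apply Rmult_lt_compat_r; lra).
    replace (2 * K / eps * eps) with (2 * K) in * by (field; lra). nra. }
  specialize (Hu m Hm1). lra.
Qed.

Theorem mainTheorem8 (n : nat) (f : (nat -> R) -> R) (x : nat -> R) :
  (1 <= n)%nat ->
  depends_on_first n f ->
  bounded_on_cube n f ->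
  in_open_cube n x ->
  frechet_differentiable_at n f x ->
  forall k, (k < n)%nat ->
  forall l, derivable_pt_lim (fun t => f (upd x k t)) (x k) l ->
  exists d : nat -> R,
    (forall m, derivable_pt_lim (fun t => bernstein n m f (upd x k t)) (x k) (d m)) /\
    Un_cv d l.
Proof.
  intros _ Hdep [M HM] Hx [g Hg] k Hk l Hl.
  assert (Hlg : l = g k)
    by exact (uniqueness_limite _ _ _ _ Hl (frechet_partial_derivative n f x g k Hk Hdep Hx Hg)).
  subst l. exists (fun m => bernstein_partial n m f x k). split.
  - intros m. apply bernstein_partial_derivative, Hx; exact Hk.
  - apply Un_cv_of_error_bounds. exact (bernstein_partial_error n f x g k M Hk Hx HM Hg).
Qed.
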